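(* If $X$ is a connected weighted bipartite graph whose adjacency matrix $A(X)$ is nonsingular, then no vertex of $X$ is sedentary.
   Context: Graphs are simple, connected, undirected, with nonzero real edge weights; $A(X)$ is the weighted adjacency matrix and $U(t)=e^{itA(X)}$. A vertex $u$ is sedentary if $\inf_{t>0}|U(t)_{u,u}|\ge C$ for some $0<C\le1$, and not sedentary if this infimum is $0$. *)

From HB Require Import structures.
From mathcomp Require Import all_boot all_order all_algebra.
From mathcomp Require Import all_classical all_reals all_analysis.
Set Implicit Arguments. Unset Strict Implicit. Unset Printing Implicit Defensive.
Import Order.TTheory GRing.Theory Num.Theory.
Import numFieldNormedType.Exports.
Local Open Scope ring_scope.

(* A weighted graph on the vertex set 'I_n is given by its weighted adjacency
   matrix A : real symmetric, zero diagonal (simple: no loops); the edges are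
   the pairs {i,j} with A i j != 0, the weight of the edge being A i j. *)
Definition weighted_adjacency (R : realType) (n : nat) (A : 'M[R]_n) : Prop :=
  A^T = A /\ forall i, A i i = 0.

Definition adj (R : realType) (n : nat) (A : 'M[R]_n) : rel 'I_n :=
  fun i j => A i j != 0.

Definition connected_graph (R : realType) (n : nat) (A : 'M[R]_n) : Prop :=
  forall i j : 'I_n, connect (adj A) i j.

Definition bipartite_graph (R : realType) (n : nat) (A : 'M[R]_n) : Prop :=
  exists f : 'I_n -> bool, forall i j, adj A i j -> f i != f j.

(* U(t) = exp(i t A) = \sum_k (i t)^k A^k / k!.  Its (u,u) entry has
   real part  \sum_k [k even] (-1)^(k/2) t^k (A^k)_{uu} / k!
   and imaginary part \sum_k [k odd] (-1)^((k-1)/2) t^k (A^k)_{uu} / k!. *)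
Definition U_re (R : realType) (n : nat) (A : 'M[R]_n) (t : R) (u : 'I_n) : R :=
  limn (series (fun k : nat =>
    if odd k then 0 else (-1) ^+ k./2 * t ^+ k / (k`!)%:R * (A ^+ k) u u)).

Definition U_im (R : realType) (n : nat) (A : 'M[R]_n) (t : R) (u : 'I_n) : R :=
  limn (series (fun k : nat =>
    if odd k then (-1) ^+ k./2 * t ^+ k / (k`!)%:R * (A ^+ k) u u else 0)).

Definition U_abs (R : realType) (n : nat) (A : 'M[R]_n) (t : R) (u : 'I_n) : R :=
  Num.sqrt (U_re A t u ^+ 2 + U_im A t u ^+ 2).

Definition sedentary (R : realType) (n : nat) (A : 'M[R]_n) (u : 'I_n) : Prop :=
  exists C : R, 0 < C <= 1 /\ forall t : R, 0 < t -> C <= U_abs A t u.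

From HB Require Import structures.
From mathcomp Require Import all_boot all_order all_algebra.
From mathcomp Require Import all_classical all_reals all_analysis.
From mathcomp Require Import complex.
From mathcomp Require Import ring lra.
Set Implicit Arguments.
Unset Strict Implicit.
Unset Printing Implicit Defensive.

Import Order.TTheory GRing.Theory Num.Theory.
Import numFieldNormedType.Exports.
Local Open Scope classical_set_scope.
Local Open Scope ring_scope.

(* Diagonalising the symmetric matrix A gives (A^k)_{uu} = \sum_j w_j l_j^k
   with \sum_j w_j = 1 and, A being nonsingular, every eigenvalue l_j nonzero.
   Closed walks in a bipartite graph have even length, so
   U(t)_{uu} = \sum_j w_j cos (l_j t) is real.  A cosine sum with nonzero
   frequencies is nonpositive at arbitrarily large times, by induction on the
   number of frequencies: its values at t and t + pi/|l| add up to a cosine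
   sum in which the frequency l no longer occurs.  As U(0)_{uu} = 1, the
   intermediate value theorem yields some t > 0 with U(t)_{uu} = 0. *)

Section CosineSums.
Variable R : realType.

Lemma cos_add_cos_shift (x c : R) :
  cos x + cos (x + c) = 2 * cos (c / 2) * cos (x + c / 2).
Proof.
have -> : cos x = cos ((x + c / 2) - c / 2) by rewrite addrK.
have -> : cos (x + c) = cos ((x + c / 2) + c / 2) by rewrite -addrA -splitr.
set y := x + c / 2; set d := c / 2.
by rewrite cosB cosD; ring.
Qed.

Lemma cos_half_period (a : R) : a != 0 -> cos (a * (pi / `|a|) / 2) = 0.
Proof.
rewrite neq_lt => /orP[a_lt0|a_gt0].
- have -> : a * (pi / `|a|) / 2 = - (pi / 2).
    by rewrite ltr0_norm //; field; rewrite lt_eqF.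
  by rewrite cosN cos_pihalf.
- have -> : a * (pi / `|a|) / 2 = pi / 2.
    by rewrite gtr0_norm //; field; rewrite gt_eqF.
  exact: cos_pihalf.
Qed.

Variables (I : Type) (l : I -> R).

Lemma cos_sum_shift (s : seq I) (a p : I -> R) (t h : R) :
  \sum_(j <- s) a j * cos (l j * t + p j) +
  \sum_(j <- s) a j * cos (l j * (t + h) + p j) =
  \sum_(j <- s) (2 * cos (l j * h / 2) * a j) *
                 cos (l j * t + (p j + l j * h / 2)).
Proof.
rewrite -big_split; apply: eq_bigr => j _ /=.
have -> : l j * (t + h) + p j = (l j * t + p j) + l j * h by ring.
rewrite -mulrDr cos_add_cos_shift addrA; ring.
Qed.

Lemma cos_sum_continuous (s : seq I) (a : I -> R) :
  continuous (fun t : R => \sum_(j <- s) a j * cos (l j * t)).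
Proof.
apply: continuous_big => [|j _ t]; first exact: add_continuous.
apply: continuousM; first exact: cst_continuous.
apply: continuous_comp; last exact: continuous_cos.
apply: continuousM; [exact: cst_continuous | exact: cvg_id].
Qed.

Hypothesis l_neq0 : forall j, l j != 0.

Lemma cos_sum_nonpos_after (s : seq I) (a p : I -> R) (t0 : R) :
  exists2 t, t0 <= t & \sum_(j <- s) a j * cos (l j * t + p j) <= 0.
Proof.
elim: s a p => [|x s IHs] a p; first by exists t0; rewrite ?big_nil.
pose h := pi / `|l x|.
have h_gt0 : 0 < h by rewrite divr_gt0 ?pi_gt0 ?normr_gt0.
have cos_h : cos (l x * h / 2) = 0 := cos_half_period (l_neq0 x).
have [t t0_le_t sum_le0] :=
  IHs (fun j => 2 * cos (l j * h / 2) * a j) (fun j => p j + l j * h / 2).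
have pair := cos_sum_shift (x :: s) a p t h.
rewrite [in RHS]big_cons cos_h mulr0 !mul0r add0r in pair.
have [le0|gt0] := lerP (\sum_(j <- x :: s) a j * cos (l j * t + p j)) 0.
  by exists t.
by exists (t + h); lra.
Qed.

Lemma cos_sum_root (s : seq I) (a : I -> R) : 0 < \sum_(j <- s) a j ->
  exists2 c, 0 < c & \sum_(j <- s) a j * cos (l j * c) = 0.
Proof.
move=> sum_gt0; pose f t := \sum_(j <- s) a j * cos (l j * t).
have f0 : f 0 = \sum_(j <- s) a j.
  by apply: eq_bigr => j _; rewrite mulr0 cos0 mulr1.
have [t t_ge1 sum_le0] := cos_sum_nonpos_after s a (fun=> 0) 1.
have ft_le0 : f t <= 0 by move: sum_le0; under eq_bigr do rewrite addr0.
have [c c_in fc0] : exists2 c, c \in `[0, t] & f c = 0.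
  apply: IVT; first lra.
    exact/continuous_subspaceT/cos_sum_continuous.
  by rewrite f0 ge_min le_max ft_le0 (ltW sum_gt0) orbT.
have c_neq0 : c != 0.
  by apply: contraTneq sum_gt0 => c0; move: fc0; rewrite c0 f0 => ->; rewrite ltxx.
exists c => //; move: c_in; rewrite in_itv /= => /andP[c_ge0 _].
by rewrite lt_neqAle eq_sym c_neq0.
Qed.

End CosineSums.

Section DiagonalEntry.
Variable R : realType.

Lemma cvg_series_sum (I : Type) (s : seq I) (F : I -> nat -> R) (L : I -> R) :
  (forall j, series (F j) @ \oo --> L j) ->
  series (fun k => \sum_(j <- s) F j k) @ \oo --> \sum_(j <- s) L j.
Proof.
move=> FL.
have -> : series (fun k => \sum_(j <- s) F j k) =
          (fun N => \sum_(j <- s) series (F j) N).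
  by apply/funext => N; rewrite /series /= exchange_big.
by apply: cvg_big => [|j _]; [exact: add_continuous | exact: FL].
Qed.

Lemma cvg_series_cos_coeff (x : R) : series (cos_coeff x) @ \oo --> cos x.
Proof. rewrite cos.unlock; exact: is_cvg_series_cos_coeff. Qed.

Lemma U_re_cos_sum n (A : 'M[R]_n) (u : 'I_n) (w l : 'I_n -> R) (t : R) :
  (forall k, (A ^+ k) u u = \sum_j w j * l j ^+ k) ->
  U_re A t u = \sum_j w j * cos (l j * t).
Proof.
move=> Akuu; rewrite /U_re.
have -> : (fun k => if odd k then 0
                    else (-1) ^+ k./2 * t ^+ k / (k`!)%:R * (A ^+ k) u u) =
          (fun k => \sum_j w j * cos_coeff (l j * t) k).
  apply/funext => k; rewrite Akuu /cos_coeff /=.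
  case: (odd k) => /=; first by rewrite big1 // => j _; rewrite !mul0r mulr0.
  rewrite mulr_sumr; apply: eq_bigr => j _; rewrite exprMn /exprz /=; ring.
apply: cvg_lim => //; apply: cvg_series_sum => j.
have -> : series (fun k => w j * cos_coeff (l j * t) k) =
          (fun N => w j * series (cos_coeff (l j * t)) N).
  by apply/funext => N; rewrite /series /= mulr_sumr.
apply: cvgMl_tmp; exact: cvg_series_cos_coeff.
Qed.

Lemma U_im_eq0 n (A : 'M[R]_n) (u : 'I_n) (t : R) :
  (forall k, odd k -> (A ^+ k) u u = 0) -> U_im A t u = 0.
Proof.
move=> Akuu; rewrite /U_im.
have -> : (fun k => if odd k
                    then (-1) ^+ k./2 * t ^+ k / (k`!)%:R * (A ^+ k) u u
                    else 0) = 0.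
  by apply/funext => k; case: ifP => // /Akuu ->; rewrite mulr0.
have -> : series (0 : R ^nat) = 0 by apply/funext => N; rewrite /series /= big1.
exact: lim_cst.
Qed.

End DiagonalEntry.

Section BipartiteWalks.
Variables (T : pzRingType) (n : nat) (A : 'M[T]_n) (f : 'I_n -> bool).
Hypothesis A_bip : forall i j, A i j != 0 -> f i != f j.

Lemma bipartite_expr_eq0 k i j : f i (+) f j != odd k -> (A ^+ k) i j = 0.
Proof.
elim: k i j => [|k IHk] i j side_ij.
  rewrite expr0 mxE; case: eqP => // eq_ij.
  by move: side_ij; rewrite eq_ij addbb.
rewrite exprS -mulmxE mxE big1 // => m _.
have [->|Aim_neq0] := eqVneq (A i m) 0; first by rewrite mul0r.
rewrite IHk ?mulr0 //; move: (A_bip Aim_neq0) side_ij.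
by rewrite oddS; case: (f i); case: (f j); case: (f m); case: (odd k).
Qed.

Lemma bipartite_expr_odd_diag i k : odd k -> (A ^+ k) i i = 0.
Proof. by move=> k_odd; apply: bipartite_expr_eq0; rewrite addbb k_odd. Qed.

End BipartiteWalks.

Lemma map_mx_expr (aR rR : pzRingType) (g : {rmorphism aR -> rR}) n
    (M : 'M[aR]_n) k :
  map_mx g (M ^+ k) = map_mx g M ^+ k.
Proof.
elim: k => [|k IHk]; first by rewrite !expr0 map_mx1.
by rewrite !exprS -!mulmxE map_mxM IHk.
Qed.

Lemma expr_similar_diag (F : comUnitRingType) n (P M : 'M[F]_n)
    (d : 'rV[F]_n) k :
  P \in unitmx -> M = invmx P *m diag_mx d *m P ->
  M ^+ k = invmx P *m diag_mx (\row_j (d 0 j ^+ k)) *m P.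
Proof.
move=> P_unit ->; elim: k => [|k IHk].
  rewrite (_ : diag_mx _ = 1%:M) ?mulmx1 ?mulVmx //.
  by apply/matrixP => i j; rewrite !mxE.
rewrite exprS -mulmxE IHk !mulmxA mulmxK // -(mulmxA _ (diag_mx d)) mulmx_diag.
by congr (_ *m diag_mx _ *m _); apply/rowP => j; rewrite !mxE exprS.
Qed.

Section NormalSpectrum.
Variables (C : numClosedFieldType) (n : nat) (A : 'M[C]_n).
Hypothesis A_normal : A \is normalmx.
Local Notation P := (spectralmx A).
Local Notation d := (spectral_diag A).

Lemma normalmx_expr_diag k u :
  (A ^+ k) u u = \sum_j `|P j u| ^+ 2 * d 0 j ^+ k.
Proof.
have /orthomx_spectralP A_diag := A_normal.
rewrite (expr_similar_diag k (spectral_unit A) A_diag) mul_mx_diag mxE.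
rewrite invmx_unitary ?spectral_unitarymx //; apply: eq_bigr => j _.
by rewrite !mxE normCKC mulrAC.
Qed.

Lemma spectral_diag_neq0 : A \in unitmx -> forall j, d 0 j != 0.
Proof.
move=> A_unit j; have /orthomx_spectralP := A_normal.
have := spectral_unit A; set Q := spectralmx A => Q_unit A_diag.
have : diag_mx d \in unitmx.
  have -> : diag_mx d = Q *m A *m invmx Q.
    by rewrite [in RHS]A_diag !mulmxA mulmxV // mul1mx mulmxK.
  by rewrite !unitmx_mul unitmx_inv Q_unit A_unit.
rewrite unitmxE det_diag unitfE prodf_seq_neq0 => /allP; apply.
exact: mem_index_enum.
Qed.

End NormalSpectrum.

Section RealSymmetric.
Variable R : realType.
Local Notation toC := (real_complex R).

Lemma symmetric_expr_diag_sum n (A : 'M[R]_n) (u : 'I_n) :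
  A^T = A -> A \in unitmx ->
  exists w l : 'I_n -> R,
    (forall j, l j != 0) /\ forall k, (A ^+ k) u u = \sum_j w j * l j ^+ k.
Proof.
move=> A_sym A_unit; pose Ac := map_mx toC A.
have Ac_herm : Ac \is hermsymmx.
  apply: realsym_hermsym.
    by apply/is_hermitianmxP; rewrite expr0 scale1r map_mx_id // /Ac map_trmx A_sym.
  by apply/mxOverP => i j; rewrite mxE; apply/complex_realP; exists (A i j).
have Ac_normal := hermitian_normalmx Ac_herm.
pose l j := complex.Re (spectral_diag Ac 0 j).
have lE j : toC (l j) = spectral_diag Ac 0 j.
  by apply: RRe_real; move/mxOverP: (hermitian_spectral_diag_real Ac_herm); apply.
pose w j := let z := spectralmx Ac j u in complex.Re z ^+ 2 + complex.Im z ^+ 2.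
exists w, l; split.
  have Ac_unit : Ac \in unitmx by rewrite map_unitmx.
  move=> j; have := spectral_diag_neq0 Ac_normal Ac_unit j.
  by rewrite -lE; apply: contra => /eqP ->; rewrite rmorph0.
move=> k; apply: complexI.
have -> : toC ((A ^+ k) u u) = map_mx toC (A ^+ k) u u by rewrite mxE.
rewrite map_mx_expr normalmx_expr_diag //.
rewrite rmorph_sum; apply: eq_bigr => j _.
by rewrite rmorphM rmorphXn /= lE add_Re2_Im2.
Qed.

End RealSymmetric.

Theorem corollary13 (R : realType) (n : nat) (A : 'M[R]_n) :
  weighted_adjacency A -> connected_graph A -> bipartite_graph A ->
  A \in unitmx ->
  forall u : 'I_n, ~ sedentary A u.
Proof.
move=> [A_sym _] _ [f A_bip] A_unit u [C [/andP[C_gt0 _] C_le_U]].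
have [w [l [l_neq0 Akuu]]] := symmetric_expr_diag_sum u A_sym A_unit.
have w_sum : 0 < \sum_j w j.
  move: (Akuu 0%N); rewrite expr0 mxE eqxx => /esym.
  by under eq_bigr do rewrite expr0 mulr1; move=> ->.
have [c c_gt0 Uc_re] := cos_sum_root l_neq0 w_sum.
have Uc0 : U_abs A c u = 0.
  rewrite /U_abs (U_re_cos_sum c Akuu) Uc_re.
  rewrite (U_im_eq0 c (bipartite_expr_odd_diag A_bip u)).
  by rewrite expr0n addr0 sqrtr0.
by move: (C_le_U c c_gt0); rewrite Uc0 leNgt C_gt0.
Qed.
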